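(* Let $1\le n_1\le n$ and let $([n_1],v,e),([n_1],u,g)$ be graphs. Extend both to size $n$ by $v_i=u_i=x_*$ and $e_{ii}=g_{ii}=y_0$ for $n_1+1\le i\le n$, and $e_{ii'}=g_{ii'}=y_*$ whenever $\max\{i,i'\}\ge n_1+1$ and $i\ne i'$. Then $D_n(([n],v,e),([n],u,g))\le D_{n_1}(([n_1],v,e),([n_1],u,g))$.
   Context: $(\mathcal X,d_{\mathcal X})$, $(\mathcal Y,d_{\mathcal Y})$ are pseudometric spaces with $\mathrm{diam}(\mathcal X)\le C_{\mathcal X}$, $\mathrm{diam}(\mathcal Y)\le C_{\mathcal Y}$, $y_0\in\mathcal Y$ a distinguished ''no edge'' element, $p\ge1$, $C_1^p\ge C_{\mathcal X}^p+\frac12C_{\mathcal Y}^p$. New points $x_*\notin\mathcal X$, $y_*\notin\mathcal Y$ are adjoined with $d_{\mathcal X}(x,x_* )^p=d_{\mathcal X}(x_*,x)^p=C_1^p-\frac12C_{\mathcal Y}^p$ for $x\in\mathcal X$, $d_{\mathcal X}(x_*,x_* )=0$, and $d_{\mathcal Y}(y,y_* )=d_{\mathcal Y}(y_*,y)=C_{\mathcal Y}$ for $y\in\mathcal Y$, $d_{\mathcal Y}(y_*,y_* )=0$. A graph $([n],v,e)$ has $v:[n]\to\mathcal X\cup\{x_*\}$ and symmetric $e:[n]^2\to\mathcal Y\cup\{y_*\}$ with $e_{ii}=y_0$; $S_n$ is the set of permutations of $[n]=\{1,\dots,n\}$. For two graphs of equal size $N\ge1$, $$D_N\big(([N],a,g),([N],b,h)\big)=N^{-1/p}\min_{\pi\in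 S_N}\Big[\sum_{i\in[N]}d_{\mathcal X}(a_i,b_{\pi(i)})^p+\frac{1}{2(N-1)}\sum_{(i,i')\in[N]^2}d_{\mathcal Y}(g_{ii'},h_{\pi(i)\pi(i')})^p\Big]^{1/p},$$ with $0/0:=0$ (this equals both GOSPA distances between graphs of equal size). *)

From mathcomp Require Import all_boot all_order all_algebra perm.
From mathcomp Require Import all_classical all_reals all_analysis.
Set Implicit Arguments. Unset Strict Implicit. Unset Printing Implicit Defensive.
Import Order.TTheory GRing.Theory Num.Theory.
Local Open Scope ring_scope.

Section Defs.
Variable R : realType.

Definition is_pseudometric (T : Type) (d : T -> T -> R) : Prop :=
  [/\ forall x y, 0 <= d x y,
      forall x, d x x = 0,
      forall x y, d x y = d y x &
      forall x y z, d x z <= d x y + d y z].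

(* X u {x_star} is option X (None = x_star); Y u {y_star} is option Y (None = y_star). *)
(* d(x,x_star)^p = C1^p - C_Y^p/2, i.e. d(x,x_star) = (C1^p - C_Y^p/2)^(1/p). *)
Definition dXext (X : Type) (dX : X -> X -> R) (p C1 CY : R)
    (a b : option X) : R :=
  match a, b with
  | Some x, Some x' => dX x x'
  | None, None => 0
  | _, _ => (C1 `^ p - CY `^ p / 2) `^ p^-1
  end.

Definition dYext (Y : Type) (dY : Y -> Y -> R) (CY : R) (a b : option Y) : R :=
  match a, b with
  | Some y, Some y' => dY y y'
  | None, None => 0
  | _, _ => CY
  end.

Definition is_graph (X Y : Type) (y0 : Y) (N : nat)
    (v : 'I_N -> option X) (e : 'I_N -> 'I_N -> option Y) : Prop :=
  (forall i j, e i j = e j i) /\ (forall i, e i i = Some y0).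

Definition Dcost (X Y : Type) (dX' : option X -> option X -> R)
    (dY' : option Y -> option Y -> R) (p : R) (N : nat)
    (a : 'I_N -> option X) (g : 'I_N -> 'I_N -> option Y)
    (b : 'I_N -> option X) (h : 'I_N -> 'I_N -> option Y) (pi : 'S_N) : R :=
  \sum_(i < N) dX' (a i) (b (pi i)) `^ p
  + (2 * (N%:R - 1))^-1 * \sum_(i < N) \sum_(i' < N) dY' (g i i') (h (pi i) (pi i')) `^ p.
(* note: in MathComp x / 0 = 0, matching the convention 0/0 := 0 (for N = 1
   the double sum is d(y0,y0)^p = 0). *)

Definition DN (X Y : Type) (dX' : option X -> option X -> R)
    (dY' : option Y -> option Y -> R) (p : R) (N : nat)
    (a : 'I_N -> option X) (g : 'I_N -> 'I_N -> option Y)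
    (b : 'I_N -> option X) (h : 'I_N -> 'I_N -> option Y) : R :=
  N%:R `^ (- p^-1) *
  (\big[Num.min/Dcost dX' dY' p a g b h 1]_(pi : 'S_N) Dcost dX' dY' p a g b h pi) `^ p^-1.

(* Extension of a size-n1 graph to size n (indices >= n1 are the new ones). *)
Definition ext_v (X : Type) (n1 n : nat) (v : 'I_n1 -> option X) : 'I_n -> option X :=
  fun i => match (insub (val i) : option 'I_n1) with
           | Some j => v j
           | None => None
           end.

Definition ext_e (Y : Type) (y0 : Y) (n1 n : nat) (e : 'I_n1 -> 'I_n1 -> option Y)
    : 'I_n -> 'I_n -> option Y :=
  fun i i' =>
    match (insub (val i) : option 'I_n1),
          (insub (val i') : option 'I_n1) with
    | Some j, Some j' => e j j'
    | _, _ => if i == i' then Some y0 else None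
    end.

End Defs.

From mathcomp Require Import all_boot all_order all_algebra perm.
From mathcomp Require Import all_classical all_reals all_analysis.
Import Order.TTheory GRing.Theory Num.Theory.
Local Open Scope ring_scope.
Set Implicit Arguments. Unset Strict Implicit.

(* Write the cost of an assignment pi as a vertex part plus (2(N-1))^-1 times
   an edge part.  Any permutation s of the n1 original indices extends to a
   permutation [pad_perm s] of [n] fixing the n - n1 new indices.  Under this
   extension every term involving a new index compares x_* with x_*, y_* with
   y_*, or y0 with y0, hence vanishes; so the padded vertex and edge parts
   equal the original ones.  Only the normalisation changes, from
   (2(n1-1))^-1 to the smaller (2(n-1))^-1 (when n1 = 1 the edge part is
   zero anyway).  Hence the minimal padded cost is at most the minimal
   original cost, and since N^(-1/p) also decreases in N, the claim follows
   from the monotonicity of t |-> t^(1/p). *)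

Section Padding.

Lemma sum_ord_pad (R : realType) (n1 n : nat) (hn : (n1 <= n)%N) (G : 'I_n -> R) :
  (forall i : 'I_n, ~~ (val i < n1)%N -> G i = 0) ->
  \sum_(i < n) G i = \sum_(i < n1) G (widen_ord hn i).
Proof.
move=> G0; rewrite (bigID (fun i : 'I_n => (val i < n1)%N)) /=.
by rewrite [X in _ + X]big1 ?addr0 ?big_ord_narrow // => i /G0.
Qed.

Variables (n1 n : nat) (hn : (n1 <= n)%N).

Definition pad_fun (s : 'S_n1) (i : 'I_n) : 'I_n :=
  if (insub (val i) : option 'I_n1) is Some j then widen_ord hn (s j) else i.

Lemma pad_fun_inj (s : 'S_n1) : injective (pad_fun s).
Proof.
move=> i j; rewrite /pad_fun.
case: insubP => [a _ ai|hi]; case: insubP => [b _ bj|hj] //.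
- move/(congr1 val)=> /= /val_inj /perm_inj ab.
  by apply: val_inj; rewrite -ai -bj ab.
- by move=> E; move: hj; rewrite -E /= ltn_ord.
- by move=> E; move: hi; rewrite E /= ltn_ord.
Qed.

Definition pad_perm (s : 'S_n1) : 'S_n := perm (@pad_fun_inj s).

Lemma pad_perm_old (s : 'S_n1) (j : 'I_n1) :
  pad_perm s (widen_ord hn j) = widen_ord hn (s j).
Proof. by rewrite permE /pad_fun /= valK. Qed.

Lemma pad_perm_new (s : 'S_n1) (i : 'I_n) : ~~ (val i < n1)%N -> pad_perm s i = i.
Proof. by move=> hi; rewrite permE /pad_fun insubN. Qed.

Lemma pad_perm_old_idx (s : 'S_n1) (i : 'I_n) :
  (val (pad_perm s i) < n1)%N = (val i < n1)%N.
Proof.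
rewrite permE /pad_fun; case: insubP => [a _ ai|//].
by rewrite /= -ai !ltn_ord.
Qed.

Lemma ext_v_old (X : Type) (v : 'I_n1 -> option X) (j : 'I_n1) :
  @ext_v _ n1 n v (widen_ord hn j) = v j.
Proof. by rewrite /ext_v /= valK. Qed.

Lemma ext_v_new (X : Type) (v : 'I_n1 -> option X) (i : 'I_n) :
  ~~ (val i < n1)%N -> @ext_v _ n1 n v i = None.
Proof. by move=> hi; rewrite /ext_v insubN. Qed.

Lemma ext_e_old (Y : Type) (y0 : Y) (e : 'I_n1 -> 'I_n1 -> option Y) (j j' : 'I_n1) :
  @ext_e _ y0 n1 n e (widen_ord hn j) (widen_ord hn j') = e j j'.
Proof. by rewrite /ext_e /= !valK. Qed.

Lemma ext_e_new (Y : Type) (y0 : Y) (e : 'I_n1 -> 'I_n1 -> option Y) (i i' : 'I_n) :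
  ~~ ((val i < n1) && (val i' < n1))%N ->
  @ext_e _ y0 n1 n e i i' = if i == i' then Some y0 else None.
Proof.
rewrite negb_and /ext_e => /orP[hi|hi'].
  by have -> : (insub (val i) : option 'I_n1) = None by rewrite insubN.
have -> : (insub (val i') : option 'I_n1) = None by rewrite insubN.
by case: (insub _).
Qed.

End Padding.

Section Cost.
Variables (R : realType) (X Y : Type).
Variables (dX' : option X -> option X -> R) (dY' : option Y -> option Y -> R).
Variables (p : R) (y0 : Y).
Hypothesis p_neq0 : p != 0.
Hypothesis dX'_star : dX' None None = 0.
Hypothesis dY'_star : dY' None None = 0.
Hypothesis dY'_y0 : dY' (Some y0) (Some y0) = 0.

Definition vertex_cost (N : nat) (a b : 'I_N -> option X) (pi : 'S_N) : R :=
  \sum_(i < N) dX' (a i) (b (pi i)) `^ p.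

Definition edge_cost (N : nat) (g h : 'I_N -> 'I_N -> option Y) (pi : 'S_N) : R :=
  \sum_(i < N) \sum_(i' < N) dY' (g i i') (h (pi i) (pi i')) `^ p.

Lemma Dcost_split (N : nat) a g b h (pi : 'S_N) :
  Dcost dX' dY' p a g b h pi
  = vertex_cost a b pi + (2 * (N%:R - 1))^-1 * edge_cost g h pi.
Proof. by []. Qed.

Lemma edge_cost_ge0 (N : nat) g h (pi : 'S_N) : 0 <= edge_cost g h pi.
Proof. by apply: sumr_ge0 => i _; apply: sumr_ge0 => j _; exact: powR_ge0. Qed.

Lemma Dcost_ge0 (N : nat) a g b h (pi : 'S_N) :
  (0 < N)%N -> 0 <= Dcost dX' dY' p a g b h pi.
Proof.
move=> N_gt0; rewrite Dcost_split addr_ge0 //.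
  by apply: sumr_ge0 => i _; exact: powR_ge0.
by rewrite mulr_ge0 ?edge_cost_ge0 // invr_ge0 mulr_ge0 // subr_ge0 ler1n.
Qed.

Variables (n1 n : nat) (hn : (n1 <= n)%N).

(* Padding leaves the vertex part unchanged: new vertices are matched
   x_* to x_*. *)
Lemma vertex_cost_pad (v u : 'I_n1 -> option X) (s : 'S_n1) :
  vertex_cost (@ext_v _ n1 n v) (@ext_v _ n1 n u) (pad_perm hn s) = vertex_cost v u s.
Proof.
rewrite /vertex_cost (sum_ord_pad hn) => [|i hi].
  by apply: eq_bigr => i _; rewrite pad_perm_old !ext_v_old.
by rewrite pad_perm_new // !ext_v_new // dX'_star powR0.
Qed.

(* Padding leaves the edge part unchanged: a new edge is matched with an edge
   of the same kind: y0 with y0, or y_* with y_*. *)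
Lemma edge_cost_pad (e g : 'I_n1 -> 'I_n1 -> option Y) (s : 'S_n1) :
  edge_cost (@ext_e _ y0 n1 n e) (@ext_e _ y0 n1 n g) (pad_perm hn s) = edge_cost e g s.
Proof.
have new_edge (i i' : 'I_n) : ~~ ((val i < n1) && (val i' < n1))%N ->
    dY' (@ext_e _ y0 n1 n e i i') (@ext_e _ y0 n1 n g (pad_perm hn s i) (pad_perm hn s i')) `^ p = 0.
  move=> hii'; rewrite !ext_e_new ?pad_perm_old_idx // (inj_eq perm_inj).
  by case: (i == i'); rewrite ?dY'_y0 ?dY'_star powR0.
rewrite /edge_cost (sum_ord_pad hn) => [|i hi]; last first.
  by apply: big1 => i' _; rewrite new_edge // negb_and hi.
apply: eq_bigr => i _; rewrite (sum_ord_pad hn) => [|i' hi']; last first.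
  by rewrite new_edge // negb_and hi' orbT.
by apply: eq_bigr => i' _; rewrite !pad_perm_old !ext_e_old.
Qed.

(* A graph with a single vertex has zero edge cost: its only edge is the
   loop y0. *)
Lemma edge_cost_single (e g : 'I_n1 -> 'I_n1 -> option Y) (v u : 'I_n1 -> option X)
    (s : 'S_n1) :
  (n1 <= 1)%N -> is_graph y0 v e -> is_graph y0 u g -> edge_cost e g s = 0.
Proof.
move=> n1_le1 [_ e_diag] [_ g_diag].
have ord_eq (i j : 'I_n1) : i = j.
  apply: ord_inj; move: (leq_trans (ltn_ord i) n1_le1) (leq_trans (ltn_ord j) n1_le1).
  by rewrite !ltnS !leqn0 => /eqP-> /eqP->.
apply: big1 => i _; apply: big1 => j _.
by rewrite -(ord_eq i j) e_diag g_diag dY'_y0 powR0.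
Qed.

Lemma Dcost_pad_le (v u : 'I_n1 -> option X) (e g : 'I_n1 -> 'I_n1 -> option Y)
    (s : 'S_n1) :
  (1 <= n1)%N -> is_graph y0 v e -> is_graph y0 u g ->
  Dcost dX' dY' p (@ext_v _ n1 n v) (@ext_e _ y0 n1 n e) (@ext_v _ n1 n u) (@ext_e _ y0 n1 n g) (pad_perm hn s)
  <= Dcost dX' dY' p v e u g s.
Proof.
move=> n1_ge1 hv hu.
rewrite !Dcost_split vertex_cost_pad edge_cost_pad lerD2l.
have [n1_gt1|n1_le1] := ltnP 1 n1; last first.
  by rewrite (edge_cost_single s n1_le1 hv hu) !mulr0.
have norm_gt0 (N : nat) : (1 < N)%N -> 0 < 2 * (N%:R - 1) :> R.
  by move=> N_gt1; rewrite mulr_gt0 // subr_gt0 ltr1n.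
rewrite ler_wpM2r ?edge_cost_ge0 // lef_pV2 ?posrE ?norm_gt0 ?(leq_trans n1_gt1) //.
by rewrite ler_pM2l // lerD2r ler_nat.
Qed.

End Cost.

Lemma scaled_root_le (R : realType) (p : R) (N M : nat) (a b : R) :
  1 <= p -> (0 < N)%N -> (N <= M)%N -> 0 <= a -> a <= b ->
  M%:R `^ (- p^-1) * a `^ p^-1 <= N%:R `^ (- p^-1) * b `^ p^-1.
Proof.
move=> p_ge1 N_gt0 NM a_ge0 ab.
have pinv_ge0 : 0 <= p^-1 by rewrite invr_ge0 (le_trans ler01 p_ge1).
have N_pos : 0 < N%:R :> R by rewrite ltr0n.
have M_pos : 0 < M%:R :> R by rewrite ltr0n (leq_trans N_gt0 NM).
apply: ler_pM; rewrite ?powR_ge0 //.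
  rewrite !powRN lef_pV2 ?posrE ?powR_gt0 //.
  by apply: ge0_ler_powR; rewrite ?nnegrE ?ler0n ?ler_nat.
by apply: ge0_ler_powR; rewrite ?nnegrE // (le_trans a_ge0).
Qed.

Theorem lemmaA (R : realType) (X Y : Type) (dX : X -> X -> R) (dY : Y -> Y -> R)
  (CX CY C1 p : R) (y0 : Y)
  (hdX : is_pseudometric dX) (hdY : is_pseudometric dY)
  (hCX : 0 <= CX) (hC1 : 0 <= C1)
  (hdiamX : forall x x', dX x x' <= CX) (hdiamY : forall y y', dY y y' <= CY)
  (hp : 1 <= p) (hC : CX `^ p + CY `^ p / 2 <= C1 `^ p)
  (n1 n : nat) (hn1 : (1 <= n1)%N) (hn : (n1 <= n)%N)
  (v u : 'I_n1 -> option X) (e g : 'I_n1 -> 'I_n1 -> option Y)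
  (hv : is_graph y0 v e) (hu : is_graph y0 u g) :
  DN (dXext dX p C1 CY) (dYext dY CY) p
     (@ext_v _ n1 n v) (@ext_e _ y0 n1 n e) (@ext_v _ n1 n u) (@ext_e _ y0 n1 n g)
  <= DN (dXext dX p C1 CY) (dYext dY CY) p v e u g.
Proof.
have p_neq0 : p != 0 by rewrite gt_eqF // (lt_le_trans ltr01 hp).
have dY_y0 : dYext dY CY (Some y0) (Some y0) = 0.
  by case: hdY => _ dY_diag _ _; exact: dY_diag.
have n_gt0 : (0 < n)%N := leq_trans hn1 hn.
pose cost_pad := Dcost (dXext dX p C1 CY) (dYext dY CY) p
  (@ext_v _ n1 n v) (@ext_e _ y0 n1 n e) (@ext_v _ n1 n u) (@ext_e _ y0 n1 n g).
pose cost := Dcost (dXext dX p C1 CY) (dYext dY CY) p v e u g.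
have pad_le s : cost_pad (pad_perm hn s) <= cost s.
  exact: (Dcost_pad_le p_neq0 (erefl _) (erefl _) dY_y0 hn s hn1 hv hu).
apply: scaled_root_le => //.
- by apply: le_bigmin => [|s _]; exact: Dcost_ge0.
- apply: le_bigmin => [|s _]; apply: le_trans (pad_le _); exact: bigmin_le.
Qed.
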